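(* Let $u\in\Sigma$, $\sigma\in\Sigma^+$ and $i,j\in\mathbb N$ with $u\ne\sigma[0]$. If $\langle\{u^i\cdot\sigma\},\{u^j\cdot\sigma\}\rangle$ has a deduction tree, then every (in particular the minimal) deduction tree of it has size at least $\min(i,j)+1$.
   Context: Let $AP$ be a finite set of atomic propositions and $\Sigma=2^{AP}$; $\sigma[0]$ is the first letter of $\sigma$ and $u^i$ is the word consisting of $i$ copies of the letter $u$. For $\sigma=w_0\cdots w_m\in\Sigma^+$ and $j\le m$, $\sigma^{(j)}=w_j\cdots w_m$. For $A\subseteq\Sigma^+$: $A^{\mathsf X}=\{\sigma^{(1)}:\sigma\in A,|\sigma|\ge2\}$; $A^{\mathsf G}=\{\sigma^{(j)}:\sigma\in A,0\le j<|\sigma|\}$; a future point for $A$ is $f:A\to\mathbb N$ with $f(\sigma)<|\sigma|$, and $A^f=\{\sigma^{(f(\sigma))}:\sigma\in A\}$. For a literal $\alpha\in\{p,\neg p:p\in AP\}$, $A\models\alpha$ means $\alpha$ holds at position $0$ of every trace in $A$; $B\perp\alpha$ means it fails at position $0$ of every trace in $B$. Proof system on terms $\langle A,B\rangle$: Atomic: $\langle A,B\rangle$ if $A\models\alpha$, $B\perp\alpha$ for a literal $\alpha$; Or: $\langle A_1\uplus A_2,B\rangle$ from $\langle A_1,B\rangle,\langle A_2,B\rangle$; And: $\langle A,B_1\uplus B_2\rangle$ from $\langle A,B_1\rangle,\langle A,B_2\rangle$; Next: $\langle A,B\rangle$ from $\langle A^{\mathsf X},B^{\mathsf X}\rangle$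 if $|A^{\mathsf X}|=|A|$; WeakNext: $\langle A,B\rangle$ from $\langle A^{\mathsf X},B^{\mathsf X}\rangle$ if $|B^{\mathsf X}|=|B|$; Future: $\langle A,B\rangle$ from $\langle A^f,B^{\mathsf G}\rangle$, $f$ a future point for $A$; Globally: $\langle A,B\rangle$ from $\langle A^{\mathsf G},B^f\rangle$, $f$ a future point for $B$ ($\uplus$ = disjoint union). A deduction tree for $\langle A,B\rangle$ is a finite tree of rule applications rooted at $\langle A,B\rangle$ with all hypotheses derived; its size is its number of rule applications. *)

From HB Require Import structures.
From mathcomp Require Import all_boot.
From mathcomp Require Import finmap.
Set Implicit Arguments. Unset Strict Implicit. Unset Printing Implicit Defensive.
Open Scope fset_scope.

Definition letter (AP : finType) := {set AP}.
(* Traces: finite words; the relevant ones are nonempty (Sigma^+). *)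
Definition trace (AP : finType) := seq {set AP}.

(* First letter sigma[0] (all traces occurring below are nonempty). *)
Definition first (AP : finType) (s : trace AP) : {set AP} := nth set0 s 0.

Definition suffix (AP : finType) (s : trace AP) (j : nat) : trace AP := drop j s.

Definition upow (AP : finType) (u : {set AP}) (i : nat) : trace AP := nseq i u.

Section Ops.
Variable AP : finType.
Implicit Types A B : {fset trace AP}.

Definition setX A : {fset trace AP} :=
  [fset suffix s 1 | s in [fset s in A | 2 <= size s]].

Definition setG A : {fset trace AP} :=
  [fset t | t in flatten [seq [seq suffix s j | j <- iota 0 (size s)] | s <- A]].

Definition future_point A (f : trace AP -> nat) : Prop :=
  forall s, s \in A -> f s < size s.

Definition setF A (f : trace AP -> nat) : {fset trace AP} :=
  [fset suffix s (f s) | s in A].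

End Ops.

Inductive literal (AP : finType) := Pos of AP | Neg of AP.

Definition lit_holds (AP : finType) (a : literal AP) (w : {set AP}) : bool :=
  match a with Pos p => p \in w | Neg p => p \notin w end.

Definition models (AP : finType) (A : {fset trace AP}) (a : literal AP) : Prop :=
  forall s, s \in A -> lit_holds a (first s).

Definition refutes (AP : finType) (B : {fset trace AP}) (a : literal AP) : Prop :=
  forall s, s \in B -> ~~ lit_holds a (first s).

Definition dunion (AP : finType) (A A1 A2 : {fset trace AP}) : Prop :=
  A = A1 `|` A2 /\ A1 `&` A2 = fset0.

Inductive deduction (AP : finType) : {fset trace AP} -> {fset trace AP} -> nat -> Prop :=
| D_atomic A B (a : literal AP) :
    models A a -> refutes B a -> deduction A B 1
| D_or A A1 A2 B n1 n2 :
    dunion A A1 A2 -> deduction A1 B n1 -> deduction A2 B n2 ->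
    deduction A B (n1 + n2).+1
| D_and A B B1 B2 n1 n2 :
    dunion B B1 B2 -> deduction A B1 n1 -> deduction A B2 n2 ->
    deduction A B (n1 + n2).+1
| D_next A B n :
    #|` setX A| = #|` A| -> deduction (setX A) (setX B) n -> deduction A B n.+1
| D_weaknext A B n :
    #|` setX B| = #|` B| -> deduction (setX A) (setX B) n -> deduction A B n.+1
| D_future A B (f : trace AP -> nat) n :
    future_point A f -> deduction (setF A f) (setG B) n -> deduction A B n.+1
| D_globally A B (f : trace AP -> nat) n :
    future_point B f -> deduction (setG A) (setF B f) n -> deduction A B n.+1.

From Pilot Require Import Defs.
From HB Require Import structures.
From mathcomp Require Import all_boot finmap zify.
Open Scope fset_scope.
Set Implicit Arguments.
Unset Strict Implicit.

(* A derivable term <A, B> separates A from B: no trace lies in both, since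
   every rule preserves a common trace in its hypotheses.  For the traces
   u^p.sigma in A and u^q.sigma in B, p <> q, induction on the tree shows
   that min(p, q) is smaller than its size: an atomic rule needs one of the
   first letters to differ, Next and WeakNext strip one u from both traces,
   and the Future (dually Globally) rule either jumps to a suffix of u^p.sigma
   that is also a suffix of u^q.sigma, breaking separation, or keeps
   u^(p-k).sigma with p - k > q, leaving min(p, q) = q unchanged. *)

Section Separation.
Variable AP : finType.
Implicit Types (A B : {fset trace AP}) (c : trace AP).

Lemma mem_setX A c : c \in A -> 1 < size c -> Defs.suffix c 1 \in Defs.setX A.
Proof. by move=> cA sc; apply: in_imfset; rewrite !inE cA. Qed.

Lemma mem_setF A f c : c \in A -> Defs.suffix c (f c) \in setF A f.
Proof. by move=> cA; apply: in_imfset. Qed.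

Lemma mem_setG A c k : c \in A -> k < size c -> Defs.suffix c k \in setG A.
Proof.
move=> cA kc; rewrite inE; apply/flatten_mapP; exists c => //.
by apply: map_f; rewrite mem_iota.
Qed.

Lemma card_setX_eq_size_gt1 A c :
  #|` Defs.setX A| = #|` A| -> c \in A -> 1 < size c.
Proof.
move=> eqAX cA; rewrite ltnNge; apply/negP => sc.
have : #|` Defs.setX A| < #|` A|.
  apply: leq_ltn_trans (leq_imfset_card _ _ _) _.
  apply: fproper_ltn_card; rewrite fproperE; apply/andP; split.
    by apply/fsubsetP => x; rewrite !inE => /andP[].
  by apply/fsubsetPn; exists c; rewrite // !inE cA /= -ltnNge ltnS.
by rewrite eqAX ltnn.
Qed.

Lemma deduction_disjoint A B n : deduction A B n -> [disjoint A & B].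
Proof.
elim=> {A B n} [A B a modA refB | A A1 A2 B n1 n2 [-> _] _ + _
  | A B B1 B2 n1 n2 [-> _] _ + _ | A B n eqAX _ | A B n eqBX _
  | A B f n fA _ | A B f n fB _].
- by apply/fdisjointP => c /modA holds; apply/negP => /refB; rewrite holds.
- by rewrite fdisjointUX => -> ->.
- by rewrite fdisjointXU => -> ->.
- move=> /fdisjointP disjX; apply/fdisjointP => c cA; apply/negP => cB.
  have sc := card_setX_eq_size_gt1 eqAX cA.
  by have /negP := disjX _ (mem_setX cA sc); apply; apply: mem_setX.
- move=> /fdisjointP disjX; apply/fdisjointP => c cA; apply/negP => cB.
  have sc := card_setX_eq_size_gt1 eqBX cB.
  by have /negP := disjX _ (mem_setX cA sc); apply; apply: mem_setX.
- move=> /fdisjointP disjFG; apply/fdisjointP => c cA; apply/negP => cB.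
  by have /negP := disjFG _ (mem_setF f cA); apply; exact: mem_setG cB (fA c cA).
- move=> /fdisjointP disjGF; apply/fdisjointP => c cA; apply/negP => cB.
  by have /negP := disjGF _ (mem_setG cA (fB c cB)); apply; apply: mem_setF.
Qed.

End Separation.

Section Padding.
Variables (AP : finType) (u : {set AP}).
Implicit Types (A B : {fset trace AP}) (s : trace AP).

Lemma size_upow_cat p s : size (upow u p ++ s) = (p + size s)%N.
Proof. by rewrite size_cat size_nseq. Qed.

Lemma suffix_upow_cat p s k :
  Defs.suffix (upow u p ++ s) k = upow u (p - k) ++ drop (k - p) s.
Proof.
rewrite /Defs.suffix /upow drop_cat size_nseq drop_nseq; case: ltnP => [kp | pk].
  by rewrite (_ : k - p = 0) ?drop0 //; lia.
by rewrite (_ : p - k = 0) //; lia.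
Qed.

Lemma suffix_upow_cat_shift p q s k : p <= k + q ->
  Defs.suffix (upow u p ++ s) k = Defs.suffix (upow u q ++ s) (k + q - p).
Proof.
by move=> le_p_kq; rewrite !suffix_upow_cat; congr (upow u _ ++ drop _ s); lia.
Qed.

(* Nonempty [s]: [setG] loses the empty trace, so the Future rule could
   otherwise drop [upow u 0 ++ s] from [B]. *)
Definition padding_bound A B n := forall p q s, 0 < size s -> p != q ->
  upow u p ++ s \in A -> upow u q ++ s \in B -> minn p q < n.

Lemma padding_bound_sym A B n : padding_bound A B n -> padding_bound B A n.
Proof. by move=> bAB p q s s0 pq pB qA; rewrite minnC (bAB q p s) // eq_sym. Qed.

Lemma padding_bound_atomic A B a :
  models A a -> refutes B a -> padding_bound A B 1.
Proof.
move=> modA refB [|p] [|q] s _ _ pA qB; rewrite ?min0n ?minn0 //.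
by have := refB _ qB; rewrite (modA _ pA).
Qed.

Lemma padding_bound_fsetU A1 A2 B n1 n2 :
  padding_bound A1 B n1 -> padding_bound A2 B n2 ->
  padding_bound (A1 `|` A2) B (n1 + n2).+1.
Proof.
move=> b1 b2 p q s s0 pq; rewrite inE => /orP[] pA qB.
  by have := b1 p q s s0 pq pA qB; lia.
by have := b2 p q s s0 pq pA qB; lia.
Qed.

Lemma padding_bound_next A B n :
  padding_bound (Defs.setX A) (Defs.setX B) n -> padding_bound A B n.+1.
Proof.
move=> bX [|p] [|q] s s0 pq pA qB; rewrite ?min0n ?minn0 //.
have tail_mem r C : upow u r.+1 ++ s \in C -> upow u r ++ s \in Defs.setX C.
  move=> rC; have := mem_setX rC; rewrite suffix_upow_cat subSS !subn0 drop0.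
  by apply; rewrite size_upow_cat; lia.
by rewrite minnSS ltnS (bX p q s s0 pq) ?tail_mem.
Qed.

Lemma padding_bound_future A B f n : future_point A f ->
  [disjoint setF A f & setG B] -> padding_bound (setF A f) (setG B) n ->
  padding_bound A B n.+1.
Proof.
move=> fA /fdisjointP disjFG bFG p q s s0 pq pA qB.
have kA := mem_setF f pA.
have lt_k_ps : f (upow u p ++ s) < p + size s by rewrite -size_upow_cat fA.
set k := f _ in kA lt_k_ps.
have [le_p_kq | lt_kq_p] := leqP p (k + q).
  have kB : Defs.suffix (upow u q ++ s) (k + q - p) \in setG B.
    by apply: mem_setG; rewrite // size_upow_cat; lia.
  by move: (disjFG _ kA); rewrite (suffix_upow_cat_shift (q := q)) ?kB.
have qG : upow u q ++ s \in setG B.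
  by have := mem_setG (k := 0) qB; rewrite /Defs.suffix drop0 size_upow_cat; apply; lia.
rewrite suffix_upow_cat (_ : k - p = 0) ?drop0 in kA; last by lia.
have := bFG (p - k) q s s0 ltac:(lia) kA qG; lia.
Qed.

Lemma deduction_padding_bound A B n : deduction A B n -> padding_bound A B n.
Proof.
elim=> {A B n} [A B a | A A1 A2 B n1 n2 [-> _] _ b1 _ b2
  | A B B1 B2 n1 n2 [-> _] _ b1 _ b2 | A B n _ _ | A B n _ _
  | A B f n fA D | A B f n fB D].
- exact: padding_bound_atomic.
- exact: padding_bound_fsetU.
- by apply/padding_bound_sym/padding_bound_fsetU; apply: padding_bound_sym.
- exact: padding_bound_next.
- exact: padding_bound_next.
- by apply: padding_bound_future; rewrite // (deduction_disjoint D).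
- move=> bGF; apply/padding_bound_sym/(padding_bound_future fB).
    by rewrite fdisjoint_sym (deduction_disjoint D).
  exact: padding_bound_sym.
Qed.

End Padding.

Theorem lemma11 (AP : finType) (u : {set AP}) (sigma : trace AP) (i j : nat) :
  0 < size sigma -> u != first sigma ->
  forall n : nat,
    deduction [fset upow u i ++ sigma] [fset upow u j ++ sigma] n ->
    minn i j + 1 <= n.
Proof.
move=> sigma0 _ n; rewrite addn1.
have [<- | ij] := eqVneq i j => D.
  by have := deduction_disjoint D; rewrite fdisjoint1X inE eqxx.
exact: (deduction_padding_bound (u := u) D sigma0 ij (fset11 _) (fset11 _)).
Qed.
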